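(* Let $R$ be an exchange ring and $\alpha=[a_1\ a_2\ \cdots\ a_n]$ a right unimodular row over $R$ (i.e. $a_1R+\cdots+a_nR=R$). Then $\alpha$ can be transformed by a finite sequence of elementary column operations to a row $[b_1\ b_2\ \cdots\ b_n]$ such that $R=b_1R\oplus\cdots\oplus b_nR$ and $b_i\in a_iRa_i$ for each $i$.
   Context: All rings are unital. A ring $R$ is an exchange ring if for every $a\in R$ there is an idempotent $e\in aR$ with $1-e\in(1-a)R$ (equivalently, $R_R$ has the finite exchange property). An elementary column operation on a row $[c_1\ \cdots\ c_n]$ replaces some entry $c_i$ by $c_i+c_jr$ for some $j\neq i$ and $r\in R$ (right multiplication of the $1\times n$ matrix by a transvection $I+re_{ji}$). *)

From HB Require Import structures.
From mathcomp Require Import all_boot all_algebra.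
Set Implicit Arguments. Unset Strict Implicit. Unset Printing Implicit Defensive.
Import GRing.Theory.
Local Open Scope ring_scope.

(* Rings are unital, possibly non-commutative (pzRingType allows the zero ring). *)

Definition in_rideal (R : pzRingType) (a x : R) : Prop := exists r : R, x = a * r.

Definition exchange_ring (R : pzRingType) : Prop :=
  forall a : R, exists e : R, e * e = e /\ in_rideal a e /\ in_rideal (1 - a) (1 - e).

Definition right_unimodular (R : pzRingType) (n : nat) (a : 'I_n -> R) : Prop :=
  exists x : 'I_n -> R, \sum_(i < n) a i * x i = 1.

Definition elem_col_op (R : pzRingType) (n : nat) (c d : 'I_n -> R) : Prop :=
  exists (i j : 'I_n) (r : R), i != j /\
    forall k, d k = (if k == i then c i + c j * r else c k).

Inductive col_reach (R : pzRingType) (n : nat) : ('I_n -> R) -> ('I_n -> R) -> Prop :=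
| col_reach_refl c : col_reach c c
| col_reach_step c d e : elem_col_op c d -> col_reach d e -> col_reach c e.

Definition rdirect_sum_decomp (R : pzRingType) (n : nat) (b : 'I_n -> R) : Prop :=
  (forall y : R, exists x : 'I_n -> R, \sum_(i < n) b i * x i = y) /\
  (forall x : 'I_n -> R, \sum_(i < n) b i * x i = 0 -> forall i, b i * x i = 0).

(* Passing the exchange property down to corner rings [fRf], a decomposition
   [1 = a_1 x_1 + ... + a_n x_n] is refined, by induction on [n], into orthogonal
   idempotents [e_1 + ... + e_n = 1] with [e_i] in [a_i R].  Then [b_i := e_i a_i]
   works: writing [e_i = a_i y_i], we get [b_i = a_i y_i a_i] and [b_i y_i = e_i],
   so [b_i R = e_i R] and the sum is direct.  Moreover
   [e_k a_k = a_k - \sum_(j != k) a_j (y_j a_k)], and [b_j y_j a_k = a_j y_j a_k],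
   so the columns can be replaced one by one, each replacement being a sequence of
   elementary operations no matter which columns were already replaced. *)

From HB Require Import structures.
From mathcomp Require Import all_boot all_algebra.
From Stdlib Require Import FunctionalExtensionality.
Set Implicit Arguments. Unset Strict Implicit. Unset Printing Implicit Defensive.
Import GRing.Theory.
Local Open Scope ring_scope.

Section ColumnOperations.

Variables (R : pzRingType) (n : nat).
Implicit Types c d b : 'I_n -> R.

Lemma col_reach_trans c d b : col_reach c d -> col_reach d b -> col_reach c b.
Proof. by elim=> [//|c1 d1 e1 step _ IH /IH]; apply: col_reach_step step. Qed.

Lemma col_reach_add_seq c i (r : 'I_n -> R) (s : seq 'I_n) : i \notin s ->
  col_reach c (fun k => if k == i then c i + \sum_(j <- s) c j * r j else c k).
Proof.
elim: s c => [|j s IHs] c; [move=> _ | rewrite in_cons => /norP[ij i_s]].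
  have -> : (fun k => if k == i then c i + \sum_(j <- [::]) c j * r j else c k) = c.
    by apply: functional_extensionality => k; rewrite big_nil addr0; case: eqP => // ->.
  exact: col_reach_refl.
pose d k := if k == i then c i + c j * r j else c k.
apply: (@col_reach_step _ _ _ d); first by exists i, j, (r j).
have -> : (fun k => if k == i then c i + \sum_(l <- j :: s) c l * r l else c k)
        = (fun k => if k == i then d i + \sum_(l <- s) d l * r l else d k).
  apply: functional_extensionality => k; rewrite /d eqxx big_cons addrA.
  case: (k == i) => //; congr (_ + _); apply: eq_big_seq => l l_s.
  by case: eqP => // li; rewrite -li l_s in i_s.
exact: IHs.
Qed.

Lemma col_reach_add c i (r : 'I_n -> R) :
  col_reach c (fun k => if k == i then c i + \sum_(j | j != i) c j * r j else c k).
Proof.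
rewrite -big_filter; apply: col_reach_add_seq.
by rewrite mem_filter eqxx.
Qed.

Lemma col_reach_columnwise c b (r : 'I_n -> 'I_n -> R) :
  (forall k, b k = c k + \sum_(j | j != k) c j * r k j) ->
  (forall j k : 'I_n, j != k -> c j * r k j = b j * r k j) -> col_reach c b.
Proof.
move=> bE rE.
pose m k (i : 'I_n) := if (i < k)%N then b i else c i.
have mS k (kn : (k < n)%N) : m k.+1 = (fun i => if i == Ordinal kn
    then m k (Ordinal kn) + \sum_(j | j != Ordinal kn) m k j * r (Ordinal kn) j
    else m k i).
  apply: functional_extensionality => i; rewrite /m ltnS.
  case: (eqVneq i (Ordinal kn)) => [->|ne] /=.
    rewrite leqnn ltnn bE; congr (_ + _); apply: eq_bigr => j jk.
    by case: ifP => // _; rewrite rE.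
  have /negbTE ik : (i != k :> nat) by rewrite -(inj_eq val_inj) in ne.
  by rewrite leq_eqVlt ik.
have mn : m n = b by apply: functional_extensionality => i; rewrite /m ltn_ord.
suff reach_m k : (k <= n)%N -> col_reach c (m k) by rewrite -mn; apply: reach_m.
elim: k => [_|k IHk kn].
  have -> : m 0%N = c by apply: functional_extensionality => i; rewrite /m ltn0.
  exact: col_reach_refl.
by apply: col_reach_trans (IHk (ltnW kn)) _; rewrite (mS k kn); apply: col_reach_add.
Qed.

End ColumnOperations.

Section Idempotents.

Variable R : pzRingType.
Implicit Types f h x : R.

Definition orthogonal_idempotents n (e : 'I_n -> R) :=
  forall i j, e i * e j = if i == j then e i else 0.

Lemma corner_mull f x : f * f = f -> x = f * x * f -> f * x = x.
Proof. by move=> ff xf; rewrite {1}xf !mulrA ff -xf. Qed.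

Lemma corner_mulr f x : f * f = f -> x = f * x * f -> x * f = x.
Proof. by move=> ff xf; rewrite {1}xf -mulrA ff -xf. Qed.

Lemma corner_subr_idem f h : f * f = f -> h * h = h -> h = f * h * f ->
  (f - h) * (f - h) = f - h.
Proof.
move=> ff hh hf.
by rewrite mulrBl !mulrBr ff (corner_mull ff hf) (corner_mulr ff hf) hh subrr subr0.
Qed.

Section Orthogonal.

Variables (n : nat) (e : 'I_n -> R).
Hypothesis e_orth : orthogonal_idempotents e.

Lemma orthogonal_idem i : e i * e i = e i.
Proof. by rewrite e_orth eqxx. Qed.

Lemma orthogonal_mulr_sum i : e i * \sum_j e j = e i.
Proof.
rewrite mulr_sumr (bigD1 i) //= orthogonal_idem big1 ?addr0 // => j ji.
by rewrite e_orth eq_sym (negbTE ji).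
Qed.

Lemma orthogonal_mull_sum i : (\sum_j e j) * e i = e i.
Proof.
rewrite mulr_suml (bigD1 i) //= orthogonal_idem big1 ?addr0 // => j ji.
by rewrite e_orth (negbTE ji).
Qed.

Lemma orthogonal_sum_idem : (\sum_j e j) * (\sum_j e j) = \sum_j e j.
Proof. by rewrite mulr_suml; apply: eq_bigr => i _; apply: orthogonal_mulr_sum. Qed.

End Orthogonal.

Lemma orthogonal_idempotents_transfer n (g y : 'I_n -> R) u :
  orthogonal_idempotents g -> (forall i, g i * u = g i) -> (forall i, g i = u * y i) ->
  orthogonal_idempotents (fun i => y i * g i).
Proof.
move=> g_orth gu gy i j /=.
have gyj : g i * y j = g i * g j by rewrite -{1}gu -mulrA -gy.
rewrite -mulrA (mulrA (g i)) gyj g_orth.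
by case: eqP => [->|_]; rewrite ?orthogonal_idem // !(mul0r, mulr0).
Qed.

Lemma orthogonal_idempotents_lift0 n f (p : 'I_n -> R) (e : 'I_n.+1 -> R) :
  f * f = f -> orthogonal_idempotents p -> (forall j, p j = f * p j * f) ->
  e ord0 = f - \sum_j p j -> (forall j, e (lift ord0 j) = p j) ->
  orthogonal_idempotents e /\ \sum_i e i = f.
Proof.
move=> ff p_orth pf e0 eS.
have fP : f * \sum_j p j = \sum_j p j.
  by rewrite mulr_sumr; apply: eq_bigr => j _; exact: corner_mull.
have Pf : (\sum_j p j) * f = \sum_j p j.
  by rewrite mulr_suml; apply: eq_bigr => j _; exact: corner_mulr.
split; last by rewrite big_ord_recl e0 (eq_bigr _ (fun j _ => eS j)) subrK.
move=> i j; case: (unliftP ord0 i) => [i' ->|->]; case: (unliftP ord0 j) => [j' ->|->].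
- by rewrite !eS p_orth (inj_eq (@lift_inj _ ord0)).
- rewrite eS e0 eq_sym (negbTE (neq_lift _ _)) mulrBr (corner_mulr ff (pf _)).
  by rewrite orthogonal_mulr_sum // subrr.
- rewrite eS e0 (negbTE (neq_lift _ _)) mulrBl (corner_mull ff (pf _)).
  by rewrite orthogonal_mull_sum // subrr.
- by rewrite e0 eqxx mulrBl !mulrBr ff fP Pf orthogonal_sum_idem // subrr subr0.
Qed.

(* The idempotents [g j] of the corner [(f - h) R (f - h)] are moved into
   [c (lift ord0 j) R], and [f - h] is replaced by the complement of their sum. *)
Lemma orthogonal_idempotents_extend n f h (c : 'I_n.+1 -> R) (g : 'I_n -> R) :
  f * f = f -> (forall i, c i = f * c i * f) ->
  h * h = h -> h = f * h * f -> in_rideal (c ord0) h ->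
  orthogonal_idempotents g -> \sum_j g j = f - h ->
  (forall j, in_rideal ((f - h) * c (lift ord0 j)) (g j)) ->
  exists e, [/\ orthogonal_idempotents e, \sum_i e i = f &
                forall i, in_rideal (c i) (e i)].
Proof.
move=> ff cf hh hf [r hr] g_orth sumg gc.
pose f' := f - h.
have f'f : f' * f = f' by rewrite mulrBl ff (corner_mulr ff hf).
have /fin_all_exists[w gcw] := gc.
have gw j : g j = f' * (c (lift ord0 j) * w j) by rewrite mulrA gcw.
have gf' j : g j * f' = g j by rewrite /f' -sumg orthogonal_mulr_sum.
pose p j := c (lift ord0 j) * w j * g j.
have p_orth : orthogonal_idempotents p := orthogonal_idempotents_transfer g_orth gf' gw.
have f'p j : f' * p j = g j by rewrite /p mulrA -gw orthogonal_idem.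
have gf j : g j * f = g j by rewrite -gf' -mulrA f'f.
have pf j : p j = f * p j * f.
  by rewrite /p !mulrA (corner_mull ff (cf _)) -(mulrA _ (g j)) gf.
pose e i := if unlift ord0 i is Some j then p j else f - \sum_j p j.
have e0 : e ord0 = f - \sum_j p j by rewrite /e unlift_none.
have eS j : e (lift ord0 j) = p j by rewrite /e liftK.
have [e_orth sume] := orthogonal_idempotents_lift0 ff p_orth pf e0 eS.
exists e; split=> // i; case: (unliftP ord0 i) => [j ->|->]; rewrite ?eS ?e0.
  by exists (w j * g j); rewrite /p mulrA.
(* [h = f - f'] fixes [f - \sum_j p j] because [f' * \sum_j p j = \sum_j g j = f'] *)
have f'P : f' * \sum_j p j = f' by rewrite mulr_sumr (eq_bigr _ (fun j _ => f'p j)).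
exists (r * (f - \sum_j p j)); rewrite mulrA -hr -[h](subKr f) -/f'.
rewrite mulrBl [f' * _]mulrBr f'P f'f subrr subr0 mulrBr ff mulr_sumr.
by rewrite (eq_bigr _ (fun j _ => corner_mull ff (pf j))).
Qed.

Section Exchange.

Hypothesis exR : exchange_ring R.

(* The exchange property passes to the corner ring [fRf]: apply it to [a] in
   [R] and cut the resulting idempotent down by [f] on the right. *)
Lemma exchange_corner f a : f * f = f -> a = f * a * f ->
  exists h, [/\ h * h = h, h = f * h * f, in_rideal a h & in_rideal (f - a) (f - h)].
Proof.
move=> ff af.
have [F [FF [[r Fr] [t Ft]]]] := exR a.
have fF : f * F = F by rewrite Fr mulrA (corner_mull ff af).
exists (F * f); split.
- by rewrite mulrA -(mulrA F) fF FF.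
- by rewrite !mulrA fF -mulrA ff.
- by exists (r * f); rewrite Fr mulrA.
- exists (t * f).
  have -> : f - F * f = f * ((1 - F) * f) by rewrite mulrBl mul1r mulrBr ff mulrA fF.
  by rewrite Ft !mulrA mulrBr mulr1 (corner_mull ff af).
Qed.

Lemma exchange_orthogonal_idempotents n f (c : 'I_n -> R) :
  f * f = f -> (forall i, c i = f * c i * f) -> \sum_i c i = f ->
  exists e, [/\ orthogonal_idempotents e, \sum_i e i = f &
                forall i, in_rideal (c i) (e i)].
Proof.
elim: n f c => [|n IHn] f c ff cf sumc.
  by exists (fun _ => 0); split=> [[]||[]] //; rewrite -sumc !big_ord0.
rewrite big_ord_recl in sumc.
have [h [hh hf c0h [t ht]]] := exchange_corner ff (cf ord0).
pose f' := f - h.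
have f'f' : f' * f' = f' by apply: corner_subr_idem.
pose c' j := f' * c (lift ord0 j) * t * f'.
have c'f' j : c' j = f' * c' j * f' by rewrite /c' !mulrA f'f' -!mulrA f'f'.
(* [f' = f' (f - c_0) t f'] since [f - h = (f - c_0) t] *)
have sumc' : \sum_j c' j = f'.
  have sum_tail : \sum_j c (lift ord0 j) = f - c ord0 by rewrite -sumc addrC addKr.
  by rewrite -!mulr_suml -mulr_sumr sum_tail -(mulrA f') -ht -/f' !f'f'.
have [g [g_orth sumg gc']] := IHn f' c' f'f' c'f' sumc'.
apply: orthogonal_idempotents_extend ff cf hh hf c0h g_orth sumg _ => j.
by have [s ->] := gc' j; exists (t * f' * s); rewrite /c' !mulrA.
Qed.

Lemma exchange_unimodular_idempotents n (a : 'I_n -> R) : right_unimodular a ->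
  exists e, [/\ orthogonal_idempotents e, \sum_i e i = 1 &
                forall i, in_rideal (a i) (e i)].
Proof.
move=> [x sumax].
have corner1 i : a i * x i = 1 * (a i * x i) * 1 by rewrite mul1r mulr1.
have [e [e_orth sume eax]] := exchange_orthogonal_idempotents (mulr1 1) corner1 sumax.
by exists e; split=> // i; have [s ->] := eax i; exists (x i * s); rewrite mulrA.
Qed.

End Exchange.

Lemma rdirect_sum_decomp_idempotents n (e b : 'I_n -> R) :
  orthogonal_idempotents e -> \sum_i e i = 1 ->
  (forall i, in_rideal (e i) (b i)) -> (forall i, in_rideal (b i) (e i)) ->
  rdirect_sum_decomp b.
Proof.
move=> e_orth sume be /fin_all_exists[y ey].
have eb i : e i * b i = b i by have [r ->] := be i; rewrite mulrA orthogonal_idem.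
split=> [z | z sumbz k].
  exists (fun i => y i * z); rewrite -[RHS]mul1r -sume mulr_suml.
  by apply: eq_bigr => i _; rewrite mulrA -ey.
have : e k * \sum_i b i * z i = 0 by rewrite sumbz mulr0.
rewrite mulr_sumr (bigD1 k) //= big1 ?addr0 => [|j jk]; first by rewrite mulrA eb.
by rewrite -(eb j) !mulrA e_orth eq_sym (negbTE jk) !mul0r.
Qed.

Lemma col_reach_idempotent_multiples n (a e : 'I_n -> R) :
  orthogonal_idempotents e -> \sum_i e i = 1 -> (forall i, in_rideal (a i) (e i)) ->
  col_reach a (fun i => e i * a i).
Proof.
move=> e_orth sume /fin_all_exists[y ey].
apply: (@col_reach_columnwise _ _ _ _ (fun k j => - (y j * a k))) => [k|j k _] /=.
  have sum_other : \sum_(j | j != k) e j = 1 - e k.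
    by move: sume; rewrite (bigD1 k) //= => <-; rewrite addrAC subrr add0r.
  rewrite (eq_bigr (fun j => - (e j * a k))) => [|j _]; last by rewrite mulrN mulrA -ey.
  by rewrite sumrN -mulr_suml sum_other mulrBl mul1r opprB addrC subrK.
rewrite !mulrN; congr (- _).
by rewrite mulrA -ey -mulrA (mulrA (a j)) -ey mulrA orthogonal_idem.
Qed.

End Idempotents.

Theorem lemma2p4 (R : pzRingType) (n : nat) (a : 'I_n -> R) :
  exchange_ring R -> right_unimodular a ->
  exists b : 'I_n -> R,
    col_reach a b /\ rdirect_sum_decomp b /\
    (forall i, exists r : R, b i = a i * r * a i).
Proof.
move=> exR unimod_a.
have [e [e_orth sume ea]] := exchange_unimodular_idempotents exR unimod_a.
exists (fun i => e i * a i); split; last split.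
- exact: col_reach_idempotent_multiples.
- apply: (rdirect_sum_decomp_idempotents e_orth sume) => i; first by exists (a i).
  by have [y ey] := ea i; exists y; rewrite -mulrA -ey orthogonal_idem.
- by move=> i; have [y ey] := ea i; exists y; rewrite ey.
Qed.
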